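(* For every integer $n\geq -2$, the polynomial $e_1^{n}\,\tilde e_1^{\,n}\in\mathbb{Z}\langle X\rangle$ is a polynomial with Jordan property.
   Context: Rings are associative with $1$; homomorphisms preserve $1$. A Jordan homomorphism $\alpha:R\to R'$ is a map with $(a+b)^\alpha=a^\alpha+b^\alpha$, $1^\alpha=1'$, $(aba)^\alpha=a^\alpha b^\alpha a^\alpha$ for all $a,b\in R$. Let $\mathbb{Z}\langle X\rangle$ be the free $\mathbb{Z}$-algebra on non-commuting indeterminates $x_1,x_2,\ldots$. For a finite or infinite sequence $T=(t_1,t_2,\ldots)$ in a ring $R$, $f(T)$ denotes the image of $f\in\mathbb{Z}\langle X\rangle$ under the homomorphism $x_i\mapsto t_i$ (finite sequences are padded with zeros). A polynomial $f$ has the Jordan property if $f(T)^\alpha=f(T^\alpha)$ for every Jordan homomorphism $\alpha:R\to R'$ between arbitrary rings and every finite or infinite sequence $T$ in $R$, where $T^\alpha=(t_1^\alpha,t_2^\alpha,\ldots)$. Define $e^{(-2)}:=-1$, $e^{(-1)}:=0$, $e^{(0)}:=1$, $e^{(n)}:=e^{(n-1)}x_n-e^{(n-2)}$ for $n\geq1$. Put $e_1^{m}:=e^{(m)}$ for $m\geq-2$, and $\tilde e_1^{\,m}:=e^{(m)}(x_m,x_{m-1},\ldots,x_1)$ (substituting $x_i\mapsto x_{m+1-i}$ for $i\leq m$) for $m\geq1$, $\tilde e_1^{\,m}:=e^{(m)}$ for $-2\leq m\leq 0$. *)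

From HB Require Import structures.
From mathcomp Require Import all_boot all_order all_algebra.
Set Implicit Arguments. Unset Strict Implicit. Unset Printing Implicit Defensive.
Import GRing.Theory Num.Theory.
Local Open Scope ring_scope.

(* Elements of the free Z-algebra Z<X> on non-commuting indeterminates
   x_1, x_2, ..., represented by formal ring expressions.
   [Var i] stands for the indeterminate x_(i+1) (0-based index). *)
Inductive zpoly : Type :=
| Var of nat
| Zero
| One
| Add of zpoly & zpoly
| Opp of zpoly
| Mul of zpoly & zpoly.

(* f(T): image of f under the ring homomorphism x_(i+1) |-> T i.
   A (finite or infinite) sequence t_1, t_2, ... is a map T : nat -> R
   with T i = t_(i+1) (finite sequences padded with zeros). *)
Fixpoint zeval (R : pzRingType) (T : nat -> R) (f : zpoly) : R :=
  match f with
  | Var i => T i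
  | Zero => 0
  | One => 1
  | Add f g => zeval T f + zeval T g
  | Opp f => - zeval T f
  | Mul f g => zeval T f * zeval T g
  end.

Fixpoint zsubst (s : nat -> zpoly) (f : zpoly) : zpoly :=
  match f with
  | Var i => s i
  | Zero => Zero
  | One => One
  | Add f g => Add (zsubst s f) (zsubst s g)
  | Opp f => Opp (zsubst s f)
  | Mul f g => Mul (zsubst s f) (zsubst s g)
  end.

Definition jordan_hom (R R' : pzRingType) (alpha : R -> R') : Prop :=
  [/\ forall a b, alpha (a + b) = alpha a + alpha b,
      alpha 1 = 1
    & forall a b, alpha (a * b * a) = alpha a * alpha b * alpha a].

Definition jordan_property (f : zpoly) : Prop :=
  forall (R R' : pzRingType) (alpha : R -> R'), jordan_hom alpha ->
  forall T : nat -> R, alpha (zeval T f) = zeval (fun i => alpha (T i)) f.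

(* epair n = (e^(n-1), e^(n)) for n : nat, with
   e^(-1) = 0, e^(0) = 1, e^(n) = e^(n-1) x_n - e^(n-2) (n >= 1),
   e^(-2) = -1, and x_n = Var (n-1). *)
Fixpoint epair (n : nat) : zpoly * zpoly :=
  match n with
  | 0 => (Zero, One)
  | j.+1 =>
      let p := epair j in
      (p.2, Add (Mul p.2 (Var j)) (Opp p.1))
  end.

(* eseq k = e^(k-2). *)
Definition eseq (k : nat) : zpoly :=
  match k with
  | 0 => Opp One
  | 1 => Zero
  | k'.+2 => (epair k').2
  end.

(* e^(n) for an integer n >= -2 (arbitrary junk for n < -2). *)
Definition e_poly (n : int) : zpoly := eseq (absz (n + 2)).

Definition e1 (n : int) : zpoly := e_poly n.

(* tilde e_1^m := e^(m)(x_m, ..., x_1) for m >= 1, i.e. substitute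
   x_i |-> x_(m+1-i) for i <= m; tilde e_1^m := e^(m) for -2 <= m <= 0. *)
Definition e1_tilde (m : int) : zpoly :=
  if (1 <= m) then
    let k := absz m in
    zsubst (fun i => if (i < k)%N then Var (k - 1 - i)%N else Var i) (e_poly m)
  else e_poly m.

From mathcomp Require Import all_boot all_order all_algebra.
Set Implicit Arguments. Unset Strict Implicit. Unset Printing Implicit Defensive.
Import GRing.Theory.
Local Open Scope ring_scope.

(* With C t = [[t, 1], [-1, 0]], the continuant is the corner entry
   e^(n)(t_1, ..., t_n) = (C t_1 ... C t_n)_00, and since C t^T = D (C t) D for
   D = diag(1, -1), also e^(n)(t_n, ..., t_1) = (C t_n^T ... C t_1^T)_00.  Hence
   e_1^n tilde e_1^n evaluates to the corner of
   C t_1 (... (C t_n E C t_n^T) ...) C t_1^T with E = diag(1, 0).  The entries of a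
   congruence C t Y C t^T are obtained from those of Y using only Jordan products
   t y t and linearized triple products a b c + c b a, so the data a Jordan
   homomorphism respects ([jordan_related]: the diagonal of Y and the maps
   z |-> y_10 z + z y_01, z |-> y_01 z + z y_10) propagate from E to the result. *)

Lemma rev_mkseq (A : Type) (f : nat -> A) n :
  rev (mkseq f n) = mkseq (fun i => f (n - 1 - i)%N) n.
Proof.
apply: (@eq_from_nth _ (f 0%N)) => [|i]; rewrite size_rev !size_mkseq // => lt_i_n.
rewrite nth_rev size_mkseq // !nth_mkseq //; last by rewrite ltn_subrL (leq_ltn_trans _ lt_i_n).
by rewrite subnAC subn1 subnS.
Qed.

Lemma mulr_sandwichD (R : pzRingType) (a b c : R) :
  (a + c) * b * (a + c) = a * b * a + (a * b * c + c * b * a) + c * b * c.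
Proof. by rewrite mulrDl mulrDr !mulrDl addrACA !addrA. Qed.

Section ContinuantMatrices.

Variable R : pzRingType.
Implicit Types (t z : R) (s : seq R) (A B Y : 'M[R]_2).

Lemma mulmx2E A B i j : (A * B) i j = A i 0 * B 0 j + A i 1 * B 1 j.
Proof.
rewrite [A * B]/(A *m B) mxE !big_ord_recl big_ord0 addr0.
by congr (_ * _ + A i _ * B _ j); apply: val_inj.
Qed.

Definition cont_mx t : 'M[R]_2 :=
  \matrix_(i, j) match nat_of_ord i, nat_of_ord j with
                 | O, O => t | O, _ => 1 | _, O => -1 | _, _ => 0 end.

Definition cont_prod s : 'M[R]_2 := \prod_(t <- s) cont_mx t.

Lemma cont_prod_cons t s : cont_prod (t :: s) = cont_mx t * cont_prod s.
Proof. by rewrite /cont_prod big_cons. Qed.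

Lemma cont_prod_rcons s t : cont_prod (rcons s t) = cont_prod s * cont_mx t.
Proof. by rewrite /cont_prod big_rcons. Qed.

Definition sign_mx : 'M[R]_2 :=
  \matrix_(i, j) match nat_of_ord i, nat_of_ord j with
                 | O, O => 1 | S _, S _ => -1 | _, _ => 0 end.

Lemma sign_mxK : sign_mx * sign_mx = 1.
Proof.
apply/matrixP => -[[|[|i]] //= ?] [[|[|j]] //= ?];
  by rewrite mulmx2E !mxE /= ?(mulrNN, mulr1, mul1r, mulr0, mul0r, addr0, add0r).
Qed.

Lemma tr_cont_mx t : (cont_mx t)^T = sign_mx * cont_mx t * sign_mx.
Proof.
apply/matrixP => -[[|[|i]] //= ?] [[|[|j]] //= ?];
  by rewrite !mulmx2E !mxE /= ?(mulrNN, mulr1, mul1r, mulr0, mul0r, addr0, add0r).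
Qed.

Lemma prod_tr_cont_mx s :
  \prod_(t <- s) (cont_mx t)^T = sign_mx * cont_prod s * sign_mx.
Proof.
elim: s => [|t s IHs]; first by rewrite big_nil /cont_prod big_nil mulr1 sign_mxK.
rewrite big_cons IHs tr_cont_mx cont_prod_cons !mulrA.
by rewrite -(mulrA _ sign_mx sign_mx) sign_mxK mulr1.
Qed.

Lemma prod_tr_cont_mx00 s : (\prod_(t <- s) (cont_mx t)^T) 0 0 = cont_prod s 0 0.
Proof.
by rewrite prod_tr_cont_mx !mulmx2E !mxE /= ?(mulr1, mul1r, mulr0, mul0r, addr0).
Qed.

Lemma mul_delta_mx00 A B : (A * delta_mx 0 0 * B) 0 0 = A 0 0 * B 0 0.
Proof. by rewrite !mulmx2E !mxE /= ?(mulr1, mulr0, mul0r, addr0). Qed.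

Definition cont_congr t Y : 'M[R]_2 := cont_mx t * Y * (cont_mx t)^T.

Lemma cont_congr00 t Y :
  cont_congr t Y 0 0 = t * Y 0 0 * t + (Y 1 0 * t + t * Y 0 1) + Y 1 1.
Proof. by rewrite !mulmx2E !mxE /= ?(mulr1, mul1r, mulr0, addr0) mulrDl !addrA. Qed.

Lemma cont_congr11 t Y : cont_congr t Y 1 1 = Y 0 0.
Proof. by rewrite !mulmx2E !mxE /= ?(mulN1r, mulr0, mul0r, addr0) mulrNN mulr1. Qed.

Lemma cont_congr10 t Y z :
  cont_congr t Y 1 0 * z + z * cont_congr t Y 0 1
  = - ((Y 0 0 * t * z + z * t * Y 0 0) + (Y 0 1 * z + z * Y 1 0)).
Proof.
rewrite !mulmx2E !mxE /= ?(mulN1r, mulrN1, mulr1, mul1r, mulr0, mul0r, addr0).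
by rewrite !(mulrDl, mulrDr, mulNr, mulrN, mulrA) -!opprD addrACA.
Qed.

Lemma cont_congr01 t Y z :
  cont_congr t Y 0 1 * z + z * cont_congr t Y 1 0
  = - ((t * Y 0 0 * z + z * Y 0 0 * t) + (Y 1 0 * z + z * Y 0 1)).
Proof.
rewrite !mulmx2E !mxE /= ?(mulN1r, mulrN1, mulr1, mul1r, mulr0, mul0r, addr0).
by rewrite !(mulrDl, mulrDr, mulNr, mulrN, mulrA) -!opprD addrACA.
Qed.

End ContinuantMatrices.

Section Evaluation.

Variable R : pzRingType.
Implicit Type T : nat -> R.

Lemma zeval_zsubst T (s : nat -> zpoly) f :
  zeval T (zsubst s f) = zeval (fun i => zeval T (s i)) f.
Proof. by elim: f => //= [f -> g ->|f ->|f -> g ->]. Qed.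

Lemma zeval_epair T k :
  (zeval T (epair k).1, zeval T (epair k).2)
  = (cont_prod (mkseq T k) 0 1, cont_prod (mkseq T k) 0 0).
Proof.
elim: k => [|k [IH1 IH2]]; first by rewrite /cont_prod big_nil !mxE.
rewrite /= IH1 IH2 mkseqS cont_prod_rcons !mulmx2E !mxE /=.
by rewrite ?(mulr1, mulr0, mulrN1, addr0).
Qed.

Lemma zeval_e1 T (m : nat) : zeval T (e1 m) = cont_prod (mkseq T m) 0 0.
Proof.
rewrite /e1 /e_poly -PoszD absz_nat addn2.
by have [] := zeval_epair T m.
Qed.

Lemma zeval_e1_tilde T (m : nat) :
  zeval T (e1_tilde m) = cont_prod (rev (mkseq T m)) 0 0.
Proof.
case: m => [|m]; first exact: (zeval_e1 T 0).
rewrite /e1_tilde /= zeval_zsubst -[e_poly _]/(e1 _) zeval_e1 rev_mkseq.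
congr (cont_prod _ 0 0); apply/eq_in_map => i.
by rewrite mem_iota add0n => /= ->.
Qed.

End Evaluation.

Section JordanHomomorphisms.

Variables (R R' : pzRingType) (alpha : R -> R').
Hypothesis alphaJ : jordan_hom alpha.

Lemma jordan_hom0 : alpha 0 = 0.
Proof. by case: alphaJ => alphaD _ _; apply/(addrI (alpha 0)); rewrite -alphaD !addr0. Qed.

Lemma jordan_homN a : alpha (- a) = - alpha a.
Proof.
case: alphaJ => alphaD _ _.
by apply/(addrI (alpha a)); rewrite -alphaD !subrr jordan_hom0.
Qed.

Lemma jordan_hom_triple a b c :
  alpha (a * b * c + c * b * a) = alpha a * alpha b * alpha c + alpha c * alpha b * alpha a.
Proof.
case: alphaJ => alphaD _ alphaJ3.
have := alphaJ3 (a + c) b.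
by rewrite alphaD !mulr_sandwichD !alphaD !alphaJ3 => /addIr/addrI.
Qed.

Definition jordan_related (Y : 'M[R]_2) (Y' : 'M[R']_2) : Prop :=
  [/\ alpha (Y 0 0) = Y' 0 0, alpha (Y 1 1) = Y' 1 1,
      forall z, alpha (Y 1 0 * z + z * Y 0 1) = Y' 1 0 * alpha z + alpha z * Y' 0 1
    & forall z, alpha (Y 0 1 * z + z * Y 1 0) = Y' 0 1 * alpha z + alpha z * Y' 1 0].

Lemma jordan_related_delta00 : jordan_related (delta_mx 0 0) (delta_mx 0 0).
Proof.
case: alphaJ => _ alpha1 _.
by split=> [||z|z]; rewrite !mxE /= ?(mul0r, mulr0, addr0, jordan_hom0).
Qed.

Lemma jordan_related_congr t Y Y' : jordan_related Y Y' ->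
  jordan_related (cont_congr t Y) (cont_congr (alpha t) Y').
Proof.
case: alphaJ => alphaD _ alphaJ3 [Y00 Y11 Y10 Y01].
split=> [||z|z].
- by rewrite !cont_congr00 2!alphaD alphaJ3 Y10 Y00 Y11.
- by rewrite !cont_congr11.
- by rewrite !cont_congr10 jordan_homN alphaD !jordan_hom_triple Y01 Y00.
- by rewrite !cont_congr01 jordan_homN alphaD !jordan_hom_triple Y10 Y00.
Qed.

Lemma jordan_related_cont_prod s Y Y' : jordan_related Y Y' ->
  jordan_related (cont_prod s * Y * \prod_(t <- rev s) (cont_mx t)^T)
    (cont_prod (map alpha s) * Y' * \prod_(t <- rev (map alpha s)) (cont_mx t)^T).
Proof.
move=> YY'; elim: s => [|t s IHs] /=.
  by rewrite /cont_prod !big_nil !mul1r !mulr1.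
have := jordan_related_congr t IHs.
by rewrite /cont_congr !cont_prod_cons !rev_cons !big_rcons /= !mulrA.
Qed.

Lemma jordan_hom_cont_prod_rev s :
  alpha (cont_prod s 0 0 * cont_prod (rev s) 0 0)
  = cont_prod (map alpha s) 0 0 * cont_prod (rev (map alpha s)) 0 0.
Proof.
have [corner _ _ _] := jordan_related_cont_prod s jordan_related_delta00.
by rewrite !mul_delta_mx00 !prod_tr_cont_mx00 in corner.
Qed.

End JordanHomomorphisms.

Theorem proposition3p4 (n : int) (hn : -2 <= n) :
  jordan_property (Mul (e1 n) (e1_tilde n)).
Proof.
move=> R R' alpha alphaJ T /=; have [_ alpha1 _] := alphaJ.
case: n hn => [m _|[|[|j]] //= _].
- rewrite !zeval_e1 !zeval_e1_tilde.
  have -> : mkseq (fun i => alpha (T i)) m = map alpha (mkseq T m).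
    by rewrite /mkseq -map_comp.
  exact: jordan_hom_cont_prod_rev.
- by rewrite !mul0r jordan_hom0.
- by rewrite !mulrNN !mulr1 alpha1.
Qed.
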